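(* Let $a,c,p\in\mathbb{C}$ with $-c\notin\mathbb{N}\cup\{0\}$. Define sequences $(u_n)_{n\ge0}$ and $(v_n)_{n\ge0}$ by $u_0=1$, $u_1=\frac{a}{c}+ip$, $v_0=1$, $v_1=\frac{a}{c}-ip$ and, for all integers $n\ge1$, \[ u_{n+1}=\frac{a+ip(c+2n)+n}{(n+1)(c+n)}u_n-\frac{ip-p^2}{(n+1)(c+n)}u_{n-1}, \] \[ v_{n+1}=\frac{a-ip(c+2n)+n}{(n+1)(c+n)}v_n+\frac{ip+p^2}{(n+1)(c+n)}v_{n-1}. \] Then \[ \sin(pz)\,M(a,c;z)=\sum_{n=0}^\infty\frac{u_n-v_n}{2i}z^n,\qquad z\in\mathbb{C}. \]
   Context: Here $i$ is the imaginary unit. For $a\in\mathbb{C}$, $(a)_n=a(a+1)\cdots(a+n-1)$ denotes the Pochhammer symbol, with $(a)_0=1$. For $a,c\in\mathbb{C}$ with $-c\notin\mathbb{N}\cup\{0\}$, the confluent hypergeometric (Kummer) function is $M(a,c;z)=\sum_{n=0}^\infty \frac{(a)_n}{(c)_n\,n!}z^n$, $z\in\mathbb{C}$. *)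

From Stdlib Require Import Reals Arith.
From Coquelicot Require Import Coquelicot.
Open Scope C_scope.

Fixpoint poch (a : Complex.C) (n : nat) : Complex.C :=
  match n with
  | O => 1
  | S m => poch a m * (a + RtoC (INR m))
  end.

(* Sum of a complex series, computed componentwise with Coquelicot's real
   [Series] (the limit of the partial sums whenever the series converges). *)
Definition CSeries (f : nat -> Complex.C) : Complex.C :=
  (Series (fun n => Re (f n)), Series (fun n => Im (f n))).

Definition kummerM (a c z : Complex.C) : Complex.C :=
  CSeries (fun n => poch a n / (poch c n * RtoC (INR (Factorial.fact n))) * Cpow z n).

Definition Csin (w : Complex.C) : Complex.C :=
  CSeries (fun n => if Nat.even n then 0
                   else RtoC ((-1) ^ (Nat.div2 n)) / RtoC (INR (Factorial.fact n)) * Cpow w n).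

From Stdlib Require Import Reals Lia Lra.
From Coquelicot Require Import Coquelicot.
Open Scope C_scope.

(* u_n and v_n are the Taylor coefficients of e^{ipz} M(a,c;z) and e^{-ipz} M(a,c;z).
   Indeed, if H = sum h_j z^j solves Kummer's equation z H'' + (c - z) H' - a H = 0, then
   differentiating F = e^{qz} H and using the equation gives the three-term recurrence
   (n+2)(c+n+1) F_{n+2} = (a + q(c+2n+2) + n+1) F_{n+1} - (q + q^2) F_n, which together
   with F_0 and F_1 determines F.  Euler's formula sin w = (e^{iw} - e^{-iw})/(2i) and the
   Cauchy product of the absolutely convergent series of sin(pz) and M(a,c;z) conclude. *)

Lemma RtoC_INR_neq0 n : n <> 0%nat -> RtoC (INR n) <> 0.
Proof. intros Hn H. apply (not_0_INR n Hn). now apply RtoC_inj. Qed.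

Lemma RtoC_INR_fact_neq0 n : RtoC (INR (Factorial.fact n)) <> 0.
Proof. apply RtoC_INR_neq0, Factorial.fact_neq_0. Qed.

Lemma Ci_neq0 : Ci <> 0.
Proof. intro H. injection H. lra. Qed.

Lemma C2_neq0 : (2 : C) <> 0.
Proof. intro H. injection H. lra. Qed.

Lemma Ci_sqr : Ci * Ci = - 1.
Proof. unfold Ci, Cmult, Copp, RtoC. simpl. f_equal; ring. Qed.

(* Restatements of Coquelicot's [sum_n] lemmas over [C] whose equations are typed in [C]
   (not [C_AbelianMonoid]) and use [Cplus]/[Cmult], so that [ring] and [field] apply. *)
Lemma sum_Sn_C (f : nat -> C) n : sum_n f (S n) = sum_n f n + f (S n).
Proof. exact (sum_Sn f n). Qed.

Lemma sum_n_plus_C (f g : nat -> C) n : sum_n (fun k => f k + g k) n = sum_n f n + sum_n g n.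
Proof. exact (sum_n_plus f g n). Qed.

Lemma sum_n_minus_C (f g : nat -> C) n :
  @eq C (sum_n (fun k => f k - g k) n) (sum_n f n - sum_n g n).
Proof. induction n; [now rewrite !sum_O | rewrite !sum_Sn_C, IHn; ring]. Qed.

Lemma sum_n_mult_l_C (x : C) (f : nat -> C) n : sum_n (fun k => x * f k) n = x * sum_n f n.
Proof. exact (sum_n_mult_l x f n). Qed.

Lemma sum_n_ext_loc_C (f g : nat -> C) n :
  (forall k, (k <= n)%nat -> f k = g k) -> @eq C (sum_n f n) (sum_n g n).
Proof. exact (sum_n_ext_loc f g n). Qed.

Lemma sum_n_shift (f : nat -> C) n : sum_n f (S n) = f O + sum_n (fun k => f (S k)) n.
Proof. unfold sum_n. rewrite sum_Sn_m by lia. now rewrite sum_n_m_S. Qed.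

Lemma sum_n_Re (f : nat -> C) n : Re (sum_n f n) = sum_n (fun k => Re (f k)) n.
Proof. induction n; [now rewrite !sum_O | now rewrite sum_Sn_C, sum_Sn, <- IHn]. Qed.

Lemma sum_n_Im (f : nat -> C) n : Im (sum_n f n) = sum_n (fun k => Im (f k)) n.
Proof. induction n; [now rewrite !sum_O | now rewrite sum_Sn_C, sum_Sn, <- IHn]. Qed.

Definition cauchy_prod (A B : nat -> C) (n : nat) : C := sum_n (fun k => A k * B (n - k)%nat) n.

Definition exp_coef (q : C) (k : nat) : C := Cpow q k / RtoC (INR (Factorial.fact k)).

Definition deriv_coef (h : nat -> C) (j : nat) : C := RtoC (INR (S j)) * h (S j).

Lemma exp_coef_S q k : RtoC (INR (S k)) * exp_coef q (S k) = q * exp_coef q k.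
Proof.
  unfold exp_coef. rewrite fact_simpl, mult_INR, RtoC_mult, Cpow_S.
  field. split; [apply RtoC_INR_fact_neq0 | apply RtoC_INR_neq0; lia].
Qed.

Lemma exp_coef_mult_pow q z k : exp_coef q k * Cpow z k = exp_coef (q * z) k.
Proof. unfold exp_coef. rewrite Cpow_mult_l. field. apply RtoC_INR_fact_neq0. Qed.

Section ExpCauchyProduct.

Variable q : C.

(* Coefficients of z (e^{qz})' H = q z e^{qz} H. *)
Lemma cauchy_prod_exp_weighted (h : nat -> C) N :
  sum_n (fun k => RtoC (INR k) * exp_coef q k * h (S N - k)%nat) (S N)
  = q * cauchy_prod (exp_coef q) h N.
Proof.
  rewrite sum_n_shift. simpl INR at 1. rewrite Cmult_0_l, Cmult_0_l, Cplus_0_l.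
  unfold cauchy_prod. rewrite <- sum_n_mult_l_C.
  apply sum_n_ext_loc_C. intros k _. rewrite Nat.sub_succ, exp_coef_S. ring.
Qed.

(* Coefficients of (e^{qz} H)' = q e^{qz} H + e^{qz} H'. *)
Lemma cauchy_prod_exp_deriv (h : nat -> C) n :
  RtoC (INR (S n)) * cauchy_prod (exp_coef q) h (S n)
  = q * cauchy_prod (exp_coef q) h n + cauchy_prod (exp_coef q) (deriv_coef h) n.
Proof.
  unfold cauchy_prod at 1. rewrite <- sum_n_mult_l_C.
  rewrite (sum_n_ext_loc_C _ (fun k => RtoC (INR k) * exp_coef q k * h (S n - k)%nat
     + exp_coef q k * (RtoC (INR (S n - k)) * h (S n - k)%nat))).
  2: { intros k Hk. replace (INR (S n)) with (INR k + INR (S n - k))%R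
         by (rewrite <- plus_INR; f_equal; lia).
       rewrite RtoC_plus. ring. }
  rewrite sum_n_plus_C, cauchy_prod_exp_weighted, sum_Sn_C, Nat.sub_diag.
  simpl INR at 2. rewrite Cmult_0_l, Cmult_0_r, Cplus_0_r.
  f_equal. apply sum_n_ext_loc_C. intros k Hk.
  unfold deriv_coef. now rewrite <- Nat.sub_succ_l by exact Hk.
Qed.

End ExpCauchyProduct.

Section ExpKummerProduct.

Variables (a c q : C) (h : nat -> C).
(* Kummer's equation z H'' + (c - z) H' - a H = 0 for H = sum h_j z^j, coefficientwise. *)
Hypothesis h_kummer :
  forall j, (c + RtoC (INR j)) * deriv_coef h j = (a + RtoC (INR j)) * h j.

Local Notation F := (cauchy_prod (exp_coef q) h).
Local Notation G := (cauchy_prod (exp_coef q) (deriv_coef h)).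

Lemma cauchy_prod_exp_kummer_deriv N :
  (RtoC (INR (S N)) + c) * G (S N) = (a + RtoC (INR (S N))) * F (S N) - q * F N + q * G N.
Proof.
  unfold cauchy_prod at 1. rewrite <- sum_n_mult_l_C.
  rewrite (sum_n_ext_loc_C _ (fun k => (a + RtoC (INR (S N))) * (exp_coef q k * h (S N - k)%nat)
       - RtoC (INR k) * exp_coef q k * h (S N - k)%nat
       + RtoC (INR k) * exp_coef q k * deriv_coef h (S N - k)%nat)).
  - rewrite sum_n_plus_C, sum_n_minus_C, sum_n_mult_l_C, !cauchy_prod_exp_weighted. reflexivity.
  - intros k Hk. set (j := (S N - k)%nat).
    replace (INR (S N)) with (INR k + INR j)%R by (rewrite <- plus_INR; f_equal; unfold j; lia).
    rewrite RtoC_plus.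
    transitivity (exp_coef q k * ((c + RtoC (INR j)) * deriv_coef h j)
                  + RtoC (INR k) * exp_coef q k * deriv_coef h j); [ring|].
    rewrite h_kummer. ring.
Qed.

Lemma cauchy_prod_exp_kummer_rec N :
  RtoC (INR (S (S N))) * (c + RtoC (INR (S N))) * F (S (S N))
  = (a + q * (c + 2 * RtoC (INR (S N))) + RtoC (INR (S N))) * F (S N) - (q + q * q) * F N.
Proof.
  transitivity ((c + RtoC (INR (S N))) * (RtoC (INR (S (S N))) * F (S (S N)))); [ring|].
  rewrite cauchy_prod_exp_deriv.
  transitivity (q * (c + RtoC (INR (S N))) * F (S N) + (RtoC (INR (S N)) + c) * G (S N)); [ring|].
  rewrite cauchy_prod_exp_kummer_deriv.
  assert (HG : G N = RtoC (INR (S N)) * F (S N) - q * F N) by (rewrite cauchy_prod_exp_deriv; ring).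
  rewrite HG. ring.
Qed.

End ExpKummerProduct.

Definition kummer_coef (a c : C) (j : nat) : C :=
  poch a j / (poch c j * RtoC (INR (Factorial.fact j))).

Section KummerCoefficients.

Variables a c : C.
Hypothesis hc : forall k : nat, c <> - RtoC (INR k).

Lemma c_plus_INR_neq0 j : c + RtoC (INR j) <> 0.
Proof.
  intro H. apply (hc j).
  replace c with (c + RtoC (INR j) - RtoC (INR j)) by ring. rewrite H. ring.
Qed.

Lemma poch_neq0 j : poch c j <> 0.
Proof.
  induction j as [|j IH]; simpl.
  - intro H. apply RtoC_inj in H. lra.
  - apply Cmult_neq_0; [exact IH | apply c_plus_INR_neq0].
Qed.

Lemma kummer_coef_S j :
  kummer_coef a c (S j)
  = (a + RtoC (INR j)) / ((c + RtoC (INR j)) * RtoC (INR (S j))) * kummer_coef a c j.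
Proof.
  unfold kummer_coef. rewrite fact_simpl, mult_INR, RtoC_mult. simpl poch.
  field. repeat split; auto using RtoC_INR_fact_neq0, poch_neq0, c_plus_INR_neq0.
  apply RtoC_INR_neq0. lia.
Qed.

Lemma kummer_coef_deriv j :
  (c + RtoC (INR j)) * deriv_coef (kummer_coef a c) j = (a + RtoC (INR j)) * kummer_coef a c j.
Proof.
  unfold deriv_coef. rewrite kummer_coef_S.
  field. split; [apply RtoC_INR_neq0; lia | apply c_plus_INR_neq0].
Qed.

Lemma cauchy_prod_exp_kummer_0 q : cauchy_prod (exp_coef q) (kummer_coef a c) 0 = 1.
Proof. unfold cauchy_prod, exp_coef, kummer_coef. rewrite sum_O. simpl. field. Qed.

Lemma cauchy_prod_exp_kummer_1 q : cauchy_prod (exp_coef q) (kummer_coef a c) 1 = a / c + q.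
Proof.
  assert (Hc0 : c <> 0).
  { pose proof (c_plus_INR_neq0 0) as H. simpl INR in H. now rewrite Cplus_0_r in H. }
  unfold cauchy_prod, exp_coef, kummer_coef. rewrite sum_Sn_C, sum_O. simpl. field. exact Hc0.
Qed.

End KummerCoefficients.

Lemma two_step_rec_unique (alpha beta w w' : nat -> C) :
  w 0%nat = w' 0%nat -> w 1%nat = w' 1%nat ->
  (forall n, w (S (S n)) = alpha n * w (S n) + beta n * w n) ->
  (forall n, w' (S (S n)) = alpha n * w' (S n) + beta n * w' n) ->
  forall n, w n = w' n.
Proof.
  intros h0 h1 hw hw'.
  assert (Hpair : forall n, w n = w' n /\ w (S n) = w' (S n)).
  { induction n as [|n [IH1 IH2]]; [split; assumption|].
    split; [exact IH2|]. rewrite hw, hw', IH1, IH2. reflexivity. }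
  intro n. apply Hpair.
Qed.

Lemma exp_kummer_rec_unique (a c q : C) (hc : forall k : nat, c <> - RtoC (INR k)) (w : nat -> C) :
  w 0%nat = 1 -> w 1%nat = a / c + q ->
  (forall n : nat, (1 <= n)%nat ->
     w (S n) = (a + q * (c + 2 * RtoC (INR n)) + RtoC (INR n))
                 / (RtoC (INR (S n)) * (c + RtoC (INR n))) * w n
             - (q + q * q) / (RtoC (INR (S n)) * (c + RtoC (INR n))) * w (n - 1)%nat) ->
  forall n, w n = cauchy_prod (exp_coef q) (kummer_coef a c) n.
Proof.
  intros h0 h1 hw.
  set (D n := RtoC (INR (S (S n))) * (c + RtoC (INR (S n)))).
  assert (HS : forall n, RtoC (INR (S n)) <> 0) by (intro; apply RtoC_INR_neq0; lia).
  pose proof (c_plus_INR_neq0 c hc) as Hc.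
  apply (two_step_rec_unique (fun n => (a + q * (c + 2 * RtoC (INR (S n))) + RtoC (INR (S n))) / D n)
                     (fun n => - (q + q * q) / D n)).
  - rewrite h0. symmetry. apply cauchy_prod_exp_kummer_0.
  - rewrite h1. symmetry. apply (cauchy_prod_exp_kummer_1 a c hc).
  - intro n. rewrite hw by lia. replace (S n - 1)%nat with n by lia.
    unfold D. field. auto.
  - intro n. unfold D.
    transitivity (RtoC (INR (S (S n))) * (c + RtoC (INR (S n)))
                  * cauchy_prod (exp_coef q) (kummer_coef a c) (S (S n))
                  / (RtoC (INR (S (S n))) * (c + RtoC (INR (S n))))); [field; auto|].
    rewrite (cauchy_prod_exp_kummer_rec a c q _ (kummer_coef_deriv a c hc)).
    field. auto.
Qed.

Definition sin_term (w : C) (n : nat) : C :=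
  if Nat.even n then 0
  else RtoC ((-1) ^ Nat.div2 n) / RtoC (INR (Factorial.fact n)) * Cpow w n.

Lemma sin_term_euler w k :
  sin_term w k = (exp_coef (Ci * w) k - exp_coef (- (Ci * w)) k) / (2 * Ci).
Proof.
  unfold sin_term, exp_coef.
  replace (- (Ci * w)) with (RtoC (-1) * (Ci * w)) by ring.
  rewrite !Cpow_mult_l, <- !RtoC_pow.
  destruct (Nat.Even_or_Odd k) as [[l ->]|[l ->]].
  - rewrite Nat.even_mul, pow_1_even. simpl orb. cbv iota.
    field. auto using C2_neq0, Ci_neq0, RtoC_INR_fact_neq0.
  - replace (2 * l + 1)%nat with (S (2 * l)) by lia.
    rewrite Nat.div2_succ_double, pow_1_odd, Nat.even_succ, Nat.odd_mul. simpl andb. cbv iota.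
    rewrite (Cpow_S Ci), (Cpow_mult_r Ci 2 l).
    replace (Cpow Ci 2) with (RtoC (-1)) by (simpl; rewrite Cmult_1_r; symmetry; exact Ci_sqr).
    rewrite <- RtoC_pow. field. auto using C2_neq0, Ci_neq0, RtoC_INR_fact_neq0.
Qed.

Lemma cauchy_prod_exp_sin (p z : C) (B : nat -> C) n :
  cauchy_prod (sin_term (p * z)) (fun j => B j * Cpow z j) n
  = (cauchy_prod (exp_coef (Ci * p)) B n - cauchy_prod (exp_coef (- (Ci * p))) B n)
    / (2 * Ci) * Cpow z n.
Proof.
  transitivity (/ (2 * Ci) * Cpow z n
     * sum_n (fun k => exp_coef (Ci * p) k * B (n - k)%nat
                      - exp_coef (- (Ci * p)) k * B (n - k)%nat) n).
  2: { rewrite sum_n_minus_C. unfold cauchy_prod. field. auto using C2_neq0, Ci_neq0. }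
  unfold cauchy_prod. rewrite <- sum_n_mult_l_C. apply sum_n_ext_loc_C. intros k Hk.
  rewrite sin_term_euler.
  replace (Ci * (p * z)) with (Ci * p * z) by ring.
  replace (- (Ci * p * z)) with (- (Ci * p) * z) by ring.
  rewrite <- !exp_coef_mult_pow.
  replace (Cpow z n) with (Cpow z k * Cpow z (n - k)) by (rewrite <- Cpow_add_r; f_equal; lia).
  field. auto using C2_neq0, Ci_neq0.
Qed.

Lemma ex_series_ratio (b : nat -> R) (r : R) (N : nat) :
  (0 <= r < 1)%R -> (forall n, 0 <= b n)%R ->
  (forall n, (N <= n)%nat -> b (S n) <= r * b n)%R -> ex_series b.
Proof.
  intros Hr Hb Hratio. apply (ex_series_incr_n b N).
  apply (@ex_series_le R_AbsRing R_CompleteNormedModule _ (fun k => b N * r ^ k)%R).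
  - intro k. change norm with Rabs. rewrite Rabs_pos_eq by apply Hb.
    induction k as [|k IH]; [rewrite Nat.add_0_r; simpl; lra|].
    rewrite Nat.add_succ_r. eapply Rle_trans; [apply Hratio; lia|].
    apply Rle_trans with (r * (b N * r ^ k))%R; [apply Rmult_le_compat_l; lra | simpl; lra].
  - apply (ex_series_scal_l (b N) (fun k => r ^ k)%R).
    eexists. apply is_series_geom. rewrite Rabs_pos_eq; lra.
Qed.

Lemma ex_series_sin_term_abs w : ex_series (fun n => Cmod (sin_term w n)).
Proof.
  apply (@ex_series_le R_AbsRing R_CompleteNormedModule _
           (fun n => Cmod w ^ n / INR (Factorial.fact n))%R).
  - intro n. change norm with Rabs. rewrite Rabs_pos_eq by apply Cmod_ge_0.
    pose proof (INR_fact_lt_0 n). pose proof (pow_le (Cmod w) n (Cmod_ge_0 w)).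
    unfold sin_term. destruct (Nat.even n).
    + rewrite Cmod_0. apply Rdiv_le_0_compat; lra.
    + rewrite Cmod_mult, Cmod_div by apply RtoC_INR_fact_neq0.
      rewrite !Cmod_R, pow_1_abs, Cmod_pow, Rabs_pos_eq by lra. right. field. lra.
  - exists (exp (Cmod w)). eapply is_series_ext; [|exact (is_exp_Reals (Cmod w))].
    intro n. rewrite pow_n_pow. reflexivity.
Qed.

Lemma Cmod_add_INR_le (a : C) n : (Cmod (a + RtoC (INR n)) <= Cmod a + INR n)%R.
Proof.
  eapply Rle_trans; [apply Cmod_triangle|].
  rewrite Cmod_R, Rabs_pos_eq by apply pos_INR. lra.
Qed.

Lemma Cmod_add_INR_ge (c : C) n : (INR n - Cmod c <= Cmod (c + RtoC (INR n)))%R.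
Proof.
  pose proof (Cmod_triangle (c + RtoC (INR n)) (- c)) as T.
  replace (c + RtoC (INR n) + - c) with (RtoC (INR n)) in T by ring.
  rewrite Cmod_opp, Cmod_R, Rabs_pos_eq in T by apply pos_INR. lra.
Qed.

Lemma kummer_ratio_eventually_le_half (a c z : C) :
  exists N, forall n, (N <= n)%nat ->
    (Cmod ((a + RtoC (INR n)) / ((c + RtoC (INR n)) * RtoC (INR (S n))) * z) <= / 2)%R.
Proof.
  destruct (INR_unbounded (Cmod c + 2 * Cmod z + 2 * Cmod a + 1)) as [N HN].
  exists N. intros n Hn.
  assert (Hx : (INR N <= INR n)%R) by (apply le_INR; exact Hn).
  pose proof (Cmod_add_INR_le a n) as Ha. pose proof (Cmod_add_INR_ge c n) as Hc.
  pose proof (Cmod_ge_0 a) as Ha0. pose proof (Cmod_ge_0 c) as Hc0. pose proof (Cmod_ge_0 z) as Hz0.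
  pose proof (Cmod_ge_0 (a + RtoC (INR n))) as HA0.
  assert (Hcn : c + RtoC (INR n) <> 0) by (intro H0; rewrite H0, Cmod_0 in Hc; lra).
  rewrite Cmod_mult, Cmod_div, Cmod_mult, Cmod_R, Rabs_pos_eq, S_INR
    by (apply pos_INR || (apply Cmult_neq_0; [exact Hcn | apply RtoC_INR_neq0; lia])).
  set (x := INR n) in *. set (A := Cmod (a + RtoC x)) in *. set (Cc := Cmod (c + RtoC x)) in *.
  assert (Hkey : (2 * ((Cmod a + x) * Cmod z) <= (x - Cmod c) * (x + 1))%R).
  { assert (0 <= Cmod a * (x + 1 - Cmod z))%R by (apply Rmult_le_pos; lra).
    assert (0 <= (x - Cmod c - (2 * Cmod z + 2 * Cmod a + 1)) * (x + 1))%R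
      by (apply Rmult_le_pos; lra).
    nra. }
  assert (HAz : (A * Cmod z <= (Cmod a + x) * Cmod z)%R) by (apply Rmult_le_compat_r; lra).
  assert (HCc : ((x - Cmod c) * (x + 1) <= Cc * (x + 1))%R) by (apply Rmult_le_compat_r; lra).
  replace (A / (Cc * (x + 1)) * Cmod z)%R with (A * Cmod z / (Cc * (x + 1)))%R by (field; lra).
  apply Rle_div_l; [apply Rmult_lt_0_compat; lra | lra].
Qed.

Lemma ex_series_kummer_term_abs (a c z : C) (hc : forall k : nat, c <> - RtoC (INR k)) :
  ex_series (fun n => Cmod (kummer_coef a c n * Cpow z n)).
Proof.
  destruct (kummer_ratio_eventually_le_half a c z) as [N HN].
  apply (ex_series_ratio _ (/ 2) N); [lra | intro; apply Cmod_ge_0 |].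
  intros n Hn. rewrite (kummer_coef_S a c hc), Cpow_S.
  set (r := (a + RtoC (INR n)) / ((c + RtoC (INR n)) * RtoC (INR (S n)))).
  replace (r * kummer_coef a c n * (z * Cpow z n)) with (r * z * (kummer_coef a c n * Cpow z n)) by ring.
  rewrite (Cmod_mult (r * z)). apply Rmult_le_compat_r; [apply Cmod_ge_0 | exact (HN n Hn)].
Qed.

Lemma is_series_C (f : nat -> C) (l : C) :
  is_series (fun n => Re (f n)) (Re l) -> is_series (fun n => Im (f n)) (Im l) -> is_series f l.
Proof.
  intros HRe HIm. apply filterlim_locally. intro eps.
  generalize (filter_and _ _ (proj1 (filterlim_locally _ _) HRe eps)
                             (proj1 (filterlim_locally _ _) HIm eps)).
  apply filter_imp. intros n [Hr Hi].
  split; simpl; [rewrite <- sum_n_Re in Hr | rewrite <- sum_n_Im in Hi]; assumption.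
Qed.

Lemma ex_series_Re_abs (A : nat -> C) :
  ex_series (fun n => Cmod (A n)) -> ex_series (fun n => Rabs (Re (A n))).
Proof.
  apply (@ex_series_le R_AbsRing R_CompleteNormedModule). intro n.
  change norm with Rabs. rewrite Rabs_Rabsolu. apply re_le_Cmod.
Qed.

Lemma ex_series_Im_abs (A : nat -> C) :
  ex_series (fun n => Cmod (A n)) -> ex_series (fun n => Rabs (Im (A n))).
Proof.
  apply (@ex_series_le R_AbsRing R_CompleteNormedModule). intro n.
  change norm with Rabs. rewrite Rabs_Rabsolu.
  eapply Rle_trans; [apply Rmax_r | apply Rmax_Cmod].
Qed.

Lemma is_series_cauchy_prod (A B : nat -> C) :
  ex_series (fun n => Cmod (A n)) -> ex_series (fun n => Cmod (B n)) ->
  is_series (cauchy_prod A B) (CSeries A * CSeries B).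
Proof.
  intros HA HB.
  pose proof (ex_series_Re_abs A HA) as HRA. pose proof (ex_series_Im_abs A HA) as HIA.
  pose proof (ex_series_Re_abs B HB) as HRB. pose proof (ex_series_Im_abs B HB) as HIB.
  pose proof (Series_correct _ (ex_series_Rabs _ HRA)) as SRA.
  pose proof (Series_correct _ (ex_series_Rabs _ HIA)) as SIA.
  pose proof (Series_correct _ (ex_series_Rabs _ HRB)) as SRB.
  pose proof (Series_correct _ (ex_series_Rabs _ HIB)) as SIB.
  apply is_series_C.
  - eapply is_series_ext;
      [|exact (is_series_minus _ _ _ _ (is_series_mult _ _ _ _ SRA SRB HRA HRB)
                                       (is_series_mult _ _ _ _ SIA SIB HIA HIB))].
    intro n. unfold cauchy_prod. rewrite sum_n_Re, sum_n_Reals. simpl. rewrite minus_sum. reflexivity.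
  - eapply is_series_ext;
      [|exact (is_series_plus _ _ _ _ (is_series_mult _ _ _ _ SRA SIB HRA HIB)
                                      (is_series_mult _ _ _ _ SIA SRB HIA HRB))].
    intro n. unfold cauchy_prod. rewrite sum_n_Im, sum_n_Reals. simpl. rewrite plus_sum. reflexivity.
Qed.

Theorem theorem2p4 (a c p : Complex.C)
  (hc : forall k : nat, c <> - RtoC (INR k))
  (u v : nat -> Complex.C)
  (hu0 : u 0%nat = 1) (hu1 : u 1%nat = a / c + Ci * p)
  (hv0 : v 0%nat = 1) (hv1 : v 1%nat = a / c - Ci * p)
  (hu : forall n : nat, (1 <= n)%nat ->
     u (S n) = (a + Ci * p * (c + 2 * RtoC (INR n)) + RtoC (INR n))
                 / (RtoC (INR (S n)) * (c + RtoC (INR n))) * u n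
             - (Ci * p - p * p) / (RtoC (INR (S n)) * (c + RtoC (INR n))) * u (n - 1)%nat)
  (hv : forall n : nat, (1 <= n)%nat ->
     v (S n) = (a - Ci * p * (c + 2 * RtoC (INR n)) + RtoC (INR n))
                 / (RtoC (INR (S n)) * (c + RtoC (INR n))) * v n
             + (Ci * p + p * p) / (RtoC (INR (S n)) * (c + RtoC (INR n))) * v (n - 1)%nat) :
  forall z : Complex.C,
    is_series (fun n => (u n - v n) / (2 * Ci) * Cpow z n)
              (Csin (p * z) * kummerM a c z).
Proof.
  intro z.
  assert (Hu : forall n, u n = cauchy_prod (exp_coef (Ci * p)) (kummer_coef a c) n).
  { apply (exp_kummer_rec_unique a c _ hc); [exact hu0 | exact hu1 |].
    intros n Hn. rewrite hu by exact Hn. unfold Cdiv. ring [Ci_sqr]. }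
  assert (Hv : forall n, v n = cauchy_prod (exp_coef (- (Ci * p))) (kummer_coef a c) n).
  { apply (exp_kummer_rec_unique a c _ hc); [exact hv0 | rewrite hv1; ring |].
    intros n Hn. rewrite hv by exact Hn. unfold Cdiv. ring [Ci_sqr]. }
  change (Csin (p * z) * kummerM a c z)
    with (CSeries (sin_term (p * z)) * CSeries (fun n => kummer_coef a c n * Cpow z n)).
  eapply is_series_ext;
    [|apply is_series_cauchy_prod;
      [apply ex_series_sin_term_abs | apply (ex_series_kummer_term_abs a c z hc)]].
  intro n. rewrite cauchy_prod_exp_sin, Hu, Hv. reflexivity.
Qed.
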